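(* Let $\lambda\in\mathbb{C}$, fix $a,b\in\mathbb{C}$ with $a^2=-\lambda$ and $b^2=1-\lambda$ (i.e. $a=(-\lambda)^{1/2}$, $b=(1-\lambda)^{1/2}$), and let $\phi:\mathbb{Z}^2\to\mathbb{C}$ be a (generic, nonvanishing) solution of \[ \frac{\widetilde{\overline\phi}}{\phi}=\frac{b\,\overline\phi-a\,\widetilde\phi}{b\,\widetilde\phi-a\,\overline\phi}. \] Then \[ u=\frac{a\,\overline\phi-b\,\widetilde\phi}{\phi},\qquad v=a\,\frac{\overline\phi}{\phi} \] satisfy respectively the dKdV equation $\widetilde{\overline u}-u=\frac1{\widetilde u}-\frac1{\overline u}$ and the equation \[ \big(v\,\overline v-\widetilde v\,\widetilde{\overline v}\big)^2+\big(v-\widetilde{\overline v}\big)\big(\overline v-\widetilde v\big)\big(\lambda-v\,\overline v\big)\big(\lambda-\widetilde v\,\widetilde{\overline v}\big)=0. \]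
   Context: Shift notation: for $f:\mathbb{Z}^2\to\mathbb{C}$, $f=f_{l,m}$, $\overline f=f_{l+1,m}$, $\widetilde f=f_{l,m+1}$, $\widetilde{\overline f}=f_{l+1,m+1}$. *)

From mathcomp Require Import all_boot all_algebra.
From mathcomp Require Import complex.
From mathcomp Require Import Rstruct.
Set Implicit Arguments. Unset Strict Implicit. Unset Printing Implicit Defensive.
Import GRing.Theory Num.Theory.
Local Open Scope ring_scope.

Definition Cc : Type := complex Rdefinitions.R.

(* Lattice shifts on f : Z^2 -> C:  f = f l m, bar f = f (l+1) m,
   tilde f = f l (m+1), tilde bar f = f (l+1) (m+1). *)

Definition u_of (a b : Cc) (phi : int -> int -> Cc) (l m : int) : Cc :=
  (a * phi (l + 1) m - b * phi l (m + 1)) / phi l m.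

Definition v_of (a : Cc) (phi : int -> int -> Cc) (l m : int) : Cc :=
  a * (phi (l + 1) m / phi l m).

From mathcomp Require Import all_boot all_algebra.
From mathcomp Require Import complex Rstruct.
From mathcomp Require Import ring.
Import GRing.Theory.
Local Open Scope ring_scope.

(* Write P, X, Y, Z for phi, bar phi, tilde phi, tilde bar phi.  Cleared of
   denominators, the lattice equation for phi reads
       Z * (b Y - a X) = P * (b X - a Y),
   which says that u = (a X - b Y) / P admits the second expression
       u = (a Y - b X) / Z                                        (diagonal form).
   dKdV.  Writing X and Q (resp. Y and S) through ubar (resp. utilde) with its
   two expressions gives a Q + b X = (a^2 - b^2) Z / ubar and
   a Y + b S = (a^2 - b^2) Z / utilde; subtracting, and using the diagonal
   form of u, yields tilde bar u - u = (b^2 - a^2) (1/utilde - 1/ubar).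
   v-equation.  The quantities v, vbar, vtilde, vtildebar only involve phi on
   a 3x2 block whose two quads obey the lattice equation; solving for the two
   top corners makes the identity a rational identity in the four free values,
   checked by field. *)

(* The dKdV relation on a quad, given the two expressions of each of the four
   values of u around it (only the diagonal form is needed for u itself). *)
Lemma dKdV_of_two_forms {F : fieldType} {a b u ub ut utb X Y Z W Q R S : F} :
  ub != 0 -> ut != 0 -> Z != 0 ->
  u * Z = a * Y - b * X -> utb * Z = a * Q - b * S ->
  ub * X = a * W - b * Z -> ub * Q = a * Z - b * W ->
  ut * Y = a * Z - b * R -> ut * S = a * R - b * Z ->
  utb - u = (b ^+ 2 - a ^+ 2) * (ut^-1 - ub^-1).
Proof.
move=> ub0 ut0 Z0 eu eutb eX eQ eY eS.
have horiz : a * Q + b * X = (a ^+ 2 - b ^+ 2) * Z / ub.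
  apply: (mulIf ub0); rewrite divfK // mulrDl -!mulrA ![_ * ub]mulrC eX eQ; ring.
have vert : a * Y + b * S = (a ^+ 2 - b ^+ 2) * Z / ut.
  apply: (mulIf ut0); rewrite divfK // mulrDl -!mulrA ![_ * ut]mulrC eY eS; ring.
have -> : utb - u = ((a * Q + b * X) - (a * Y + b * S)) / Z.
  by apply: (mulIf Z0); rewrite divfK // mulrBl eu eutb; ring.
rewrite horiz vert; field.
by rewrite Z0 ub0 ut0.
Qed.

(* The v-equation on two adjacent quads (P, X, Y, Z) and (X, W, Z, Q) obeying
   the cleared lattice equation, with lambda written as - a^2. *)
Lemma v_identity {F : fieldType} {a b P X Y Z W Q : F} :
  P != 0 -> X != 0 -> Y != 0 -> Z != 0 ->
  b * Y - a * X != 0 -> b * Z - a * W != 0 ->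
  Z * (b * Y - a * X) = P * (b * X - a * Y) ->
  Q * (b * Z - a * W) = X * (b * W - a * Z) ->
  let v := a * (X / P) in let vb := a * (W / X) in
  let vt := a * (Z / Y) in let vtb := a * (Q / Z) in
  (b ^+ 2 - a ^+ 2) * (v * vb - vt * vtb) ^+ 2
    + (v - vtb) * (vb - vt) * (- a ^+ 2 - v * vb) * (- a ^+ 2 - vt * vtb) = 0.
Proof.
move=> P0 X0 Y0 Z0 D0 D'0 eZ eQ /=.
have -> : Q = X * (b * W - a * Z) / (b * Z - a * W) by rewrite -eQ mulfK.
have {eZ}eZ : Z = P * (b * X - a * Y) / (b * Y - a * X) by rewrite -eZ mulfK.
(* the numerators left after eliminating Z inherit nonvanishing from Z, bZ - aW *)
have N0 : b * X - a * Y != 0.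
  by apply: contraNneq Z0 => N0; rewrite eZ N0 mulr0 mul0r.
have A0 : b * (P * (b * X - a * Y)) - a * W * (b * Y - a * X) != 0.
  have eD' : b * Z - a * W
           = (b * (P * (b * X - a * Y)) - a * W * (b * Y - a * X)) / (b * Y - a * X).
    by rewrite eZ; field.
  by apply: contraNneq D'0 => A0; rewrite eD' A0 mul0r.
rewrite eZ; field.
by rewrite mulNr ?(P0, X0, Y0, D0, N0, A0).
Qed.

Section Lattice.

Variables (a b : Cc) (phi : int -> int -> Cc).
Hypothesis phi_neq0 : forall l m : int, phi l m != 0.
Hypothesis den_neq0 : forall l m : int, b * phi l (m + 1) - a * phi (l + 1) m != 0.
Hypothesis lattice_eq : forall l m : int,
  phi (l + 1) (m + 1) / phi l m
  = (b * phi (l + 1) m - a * phi l (m + 1)) / (b * phi l (m + 1) - a * phi (l + 1) m).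

Lemma lattice_cross (l m : int) :
  phi (l + 1) (m + 1) * (b * phi l (m + 1) - a * phi (l + 1) m)
  = phi l m * (b * phi (l + 1) m - a * phi l (m + 1)).
Proof.
by apply/eqP; rewrite [phi l m * _]mulrC -eqr_div // lattice_eq.
Qed.

Lemma u_of_mul (l m : int) :
  u_of a b phi l m * phi l m = a * phi (l + 1) m - b * phi l (m + 1).
Proof. by rewrite /u_of divfK. Qed.

(* The diagonal form of u, a restatement of the lattice equation. *)
Lemma u_of_mul_diag (l m : int) :
  u_of a b phi l m * phi (l + 1) (m + 1) = a * phi l (m + 1) - b * phi (l + 1) m.
Proof.
apply: (mulIf (phi_neq0 l m)); rewrite /u_of mulrAC divfK //.
by rewrite mulrC -opprB mulrN lattice_cross -mulrN opprB mulrC.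
Qed.

Lemma u_of_neq0 (l m : int) :
  a * phi (l + 1) m - b * phi l (m + 1) != 0 -> u_of a b phi l m != 0.
Proof. by move=> num0; rewrite /u_of mulf_neq0 ?invr_eq0. Qed.

Lemma u_dKdV (l m : int) :
  (forall l m : int, a * phi (l + 1) m - b * phi l (m + 1) != 0) ->
  u_of a b phi (l + 1) (m + 1) - u_of a b phi l m
  = (b ^+ 2 - a ^+ 2) * ((u_of a b phi l (m + 1))^-1 - (u_of a b phi (l + 1) m)^-1).
Proof.
move=> num_neq0.
exact: (dKdV_of_two_forms (u_of_neq0 (l + 1) m (num_neq0 _ _))
  (u_of_neq0 l (m + 1) (num_neq0 _ _))
  (phi_neq0 (l + 1) (m + 1)) (u_of_mul_diag l m) (u_of_mul (l + 1) (m + 1))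
  (u_of_mul (l + 1) m) (u_of_mul_diag (l + 1) m)
  (u_of_mul l (m + 1)) (u_of_mul_diag l (m + 1))).
Qed.

Lemma v_lattice (l m : int) :
  (b ^+ 2 - a ^+ 2)
    * (v_of a phi l m * v_of a phi (l + 1) m
       - v_of a phi l (m + 1) * v_of a phi (l + 1) (m + 1)) ^+ 2
  + (v_of a phi l m - v_of a phi (l + 1) (m + 1))
    * (v_of a phi (l + 1) m - v_of a phi l (m + 1))
    * (- a ^+ 2 - v_of a phi l m * v_of a phi (l + 1) m)
    * (- a ^+ 2 - v_of a phi l (m + 1) * v_of a phi (l + 1) (m + 1)) = 0.
Proof.
exact: (v_identity (phi_neq0 l m) (phi_neq0 (l + 1) m) (phi_neq0 l (m + 1))
  (phi_neq0 (l + 1) (m + 1)) (den_neq0 l m) (den_neq0 (l + 1) m)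
  (lattice_cross l m) (lattice_cross (l + 1) m)).
Qed.

End Lattice.

Theorem mainTheorem5 (lambda a b : Cc) (phi : int -> int -> Cc)
  (ha : a ^+ 2 = - lambda) (hb : b ^+ 2 = 1 - lambda)
  (* genericity: all quantities we divide by are nonzero *)
  (hphi : forall l m : int, phi l m != 0)
  (hden : forall l m : int, b * phi l (m + 1) - a * phi (l + 1) m != 0)
  (hu : forall l m : int, a * phi (l + 1) m - b * phi l (m + 1) != 0)
  (heq : forall l m : int,
     phi (l + 1) (m + 1) / phi l m
     = (b * phi (l + 1) m - a * phi l (m + 1))
       / (b * phi l (m + 1) - a * phi (l + 1) m)) :
  (forall l m : int,
     u_of a b phi (l + 1) (m + 1) - u_of a b phi l m
     = (u_of a b phi l (m + 1))^-1 - (u_of a b phi (l + 1) m)^-1)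
  /\
  (forall l m : int,
     let v := v_of a phi l m in
     let vb := v_of a phi (l + 1) m in
     let vt := v_of a phi l (m + 1) in
     let vtb := v_of a phi (l + 1) (m + 1) in
     (v * vb - vt * vtb) ^+ 2
       + (v - vtb) * (vb - vt) * (lambda - v * vb) * (lambda - vt * vtb) = 0).
Proof.
have unit_param : b ^+ 2 - a ^+ 2 = 1 by rewrite ha hb opprK subrK.
have lambdaE : lambda = - a ^+ 2 by rewrite ha opprK.
split=> l m.
  by rewrite (@u_dKdV a b phi hphi hden heq l m hu) unit_param mul1r.
move=> v vb vt vtb; rewrite /v /vb /vt /vtb {v vb vt vtb} lambdaE.
by have := @v_lattice a b phi hphi hden heq l m; rewrite unit_param mul1r.
Qed.
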